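(* Let $p>3$ be a prime number and $k$ an integer with $1\leq k\leq\frac{p-1}{2}$, and let $\zeta_p=e^{2\pi i/p}$. Then $\mathbb{Q}\!\left(\zeta_p,\sqrt[p]{\zeta_p^k+\zeta_p^{-k}}\right)/\mathbb{Q}(\zeta_p)$ is a cyclic field extension of degree $p$.
   Context: $\sqrt[p]{\zeta_p^k+\zeta_p^{-k}}$ denotes any $p$-th root of the real number $\zeta_p^k+\zeta_p^{-k}$; the field generated over $\mathbb{Q}(\zeta_p)$ does not depend on the choice. A cyclic extension is a Galois extension with cyclic Galois group. *)

From HB Require Import structures.
From mathcomp Require Import all_boot all_order all_algebra all_fingroup all_solvable all_field.
Set Implicit Arguments. Unset Strict Implicit. Unset Printing Implicit Defensive.
Import GRing.Theory Num.Theory.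
Local Open Scope ring_scope.

(* zeta_p = e^{2 pi i / p} in the algebraic complex numbers algC:
   p.-root (-1) is the p-th root of -1 of minimal non-negative argument,
   i.e. e^{i pi / p}; its square is e^{2 i pi / p}. *)
Definition zetaC (p : nat) : algC := (p.-root (-1)) ^+ 2.

From HB Require Import structures.
From mathcomp Require Import all_boot all_order all_algebra all_fingroup all_solvable all_field.
From mathcomp Require Import ring zify.
Set Implicit Arguments. Unset Strict Implicit. Unset Printing Implicit Defensive.
Import GRing.Theory Num.Theory.
Local Open Scope ring_scope.

(* Over E = Q(zeta), which contains the p-th roots of unity, X^p - b splits as
   the product of the X - a zeta^i, so E(a)/E is Galois; every sigma(a)/a is a
   root of unity, so the norm of a shows a^d in E for d = [E(a) : E] <= p, and
   since a^p is in E as well, a \notin E forces d = p, whence a cyclic group.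

   It remains to see that b = zeta^k + zeta^-k is not a p-th power in Q(zeta).
   Put pi = 1 - zeta, so that p = unit * pi^(p-1). If c^p = b, then c is an
   algebraic integer; writing c = q(zeta) with deg q < p - 1, the traces of the
   zeta^-m c show that p q has integral coefficients, and the pi-adic digits of
   p q(1 - X) then show c = e (mod pi) for a rational integer e. Hence
   b = e^p (mod p), i.e. 2 - e^p = -zeta^-k (1 - zeta^k)^2 (mod p). The right
   side has pi-valuation exactly 2, so pi divides the integer 2 - e^p, hence so
   does p, and then pi^(p-1) divides pi^2: impossible for p > 3. *)

Lemma Aint_one_subX_factor (x : algC) n : x \in Aint ->
  exists2 y, y \in Aint & 1 - x ^+ n = (1 - x) * y.
Proof.
move=> Ax; exists (\sum_(i < n) x ^+ i); first by rewrite rpred_sum // => i _; rewrite rpredX.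
by rewrite -opprB subrX1 -mulNr opprB.
Qed.

Lemma Aint_of_expr (x : algC) n : (0 < n)%N -> x ^+ n \in Aint -> x \in Aint.
Proof.
move=> n_gt0 Axn; apply: (@root_monic_Aint (minCpoly (x ^+ n) \Po 'X^n)).
- by rewrite /root horner_comp hornerXn; apply: root_minCpoly.
- rewrite monicE lead_coef_comp ?size_polyXn // lead_coefXn expr1n mulr1.
  exact: minCpoly_monic.
- by rewrite polyOver_comp ?rpredX ?polyOverX //; move: Axn; rewrite unfold_in.
Qed.

Section CyclotomicUnits.

Variables (n : nat) (w : algC).
Hypothesis prim_w : n.-primitive_root w.

Lemma one_sub_prim_rootX_eq0 i : (1 - w ^+ i == 0) = (n %| i)%N.
Proof. by rewrite subr_eq0 eq_sym -(expr0 w) (eq_prim_root_expr prim_w) mod0n. Qed.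

Lemma Aint_prim_rootXV i : (w ^+ i)^-1 \in Aint.
Proof.
apply: (Aint_unity_root (prim_order_gt0 prim_w)); apply/unity_rootP.
by rewrite exprVn exprAC (prim_expr_order prim_w) expr1n invr1.
Qed.

Lemma natr_prod_one_sub_prim_root : n%:R = \prod_(1 <= i < n) (1 - w ^+ i).
Proof.
have n_gt0 := prim_order_gt0 prim_w.
have := factor_Xn_sub_1 prim_w; rewrite big_ltn // expr0 => Dpoly.
have /(congr1 (horner^~ 1)) : \sum_(i < n) 'X^i = \prod_(1 <= i < n) ('X - (w ^+ i)%:P).
  by apply: (mulfI (negbT (polyXsubC_eq0 1))); rewrite Dpoly polyC1 subrX1.
rewrite horner_sum horner_prod => Dsum.
transitivity (\sum_(i < n) ('X^i : {poly algC}).[1]).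
  by rewrite (eq_bigr (fun=> 1)) ?sumr_const ?card_ord // => i _; rewrite hornerXn expr1n.
by rewrite Dsum; apply: eq_bigr => i _; rewrite hornerXsubC.
Qed.

Lemma Aint_one_sub_prim_rootX_div i : (1 - w ^+ i) / (1 - w) \in Aint.
Proof.
have [y Ay ->] := Aint_one_subX_factor i (Aint_prim_root prim_w).
have [->|nz_w1] := eqVneq (1 - w) 0; first by rewrite invr0 mulr0 Aint0.
by rewrite mulrC mulKf.
Qed.

Lemma Aint_natr_div_one_sub_prim_root : n%:R / (1 - w) ^+ n.-1 \in Aint.
Proof.
rewrite natr_prod_one_sub_prim_root -subn1 -(prodr_const_nat 1 n) -prodf_div.
by rewrite rpred_prod // => i _; apply: Aint_one_sub_prim_rootX_div.
Qed.

End CyclotomicUnits.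

Lemma Aint_one_sub_prim_root_divX n (w : algC) i :
  n.-primitive_root w -> coprime i n -> (1 - w) / (1 - w ^+ i) \in Aint.
Proof.
move=> prim_w co_in; have prim_wi : n.-primitive_root (w ^+ i) by rewrite prim_root_exp_coprime.
have [j Dw] := prim_rootP prim_wi (prim_expr_order prim_w).
by rewrite {1}Dw (Aint_one_sub_prim_rootX_div prim_wi).
Qed.

Lemma Aint_one_sub_prim_root_div_prime n (w : algC) :
  prime n -> n.-primitive_root w -> (1 - w) ^+ n.-1 / n%:R \in Aint.
Proof.
move=> n_pr prim_w; rewrite (natr_prod_one_sub_prim_root prim_w).
rewrite -subn1 -(prodr_const_nat 1 n) -prodf_div.
rewrite big_nat rpred_prod // => i /andP[i_gt0 lt_in].
by rewrite (Aint_one_sub_prim_root_divX prim_w) // coprime_sym prime_coprime // gtnNdvd.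
Qed.

Lemma horner_Aint_coef0 (f : {poly algC}) x : f \is a polyOver Aint -> x \in Aint ->
  exists2 r, r \in Aint & f.[x] = f`_0 + x * r.
Proof.
move=> Af Ax; exists (\sum_(i < (size f).-1) f`_i.+1 * x ^+ i).
  by rewrite rpred_sum // => i _; rewrite rpredM ?rpredX ?(polyOverP Af).
rewrite horner_coef; case Ef: (size f) => [|n] /=.
  by rewrite !big_ord0 mulr0 addr0 nth_default // Ef.
rewrite big_ord_recl /= expr0 mulr1 mulr_sumr; congr (_ + _).
by apply: eq_bigr => i _; rewrite exprS mulrCA.
Qed.

Section PrimeDivisibility.

Variable p : nat.
Hypothesis p_pr : prime p.

Lemma natr_prime_neq0 : p%:R != 0 :> algC.
Proof. by rewrite pnatr_eq0 -lt0n prime_gt0. Qed.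

Lemma Cint_div_prime_of_expr (x : algC) j : x \in Num.int -> (0 < j)%N ->
  x ^+ j / p%:R \in Aint -> x / p%:R \in Num.int.
Proof.
move=> /intrP[m ->] j_gt0 Axj.
have dvd_pC (y : int) : (p %| y%:~R)%C = (p %| `|y|)%N.
  by rewrite dvdC_int ?rpred_int // intrKfloor.
suff : (p %| m%:~R)%C by rewrite unfold_in (negPf natr_prime_neq0).
rewrite dvd_pC; suff : (p %| `|m| ^ j)%N by rewrite Euclid_dvdX // => /andP[].
rewrite -abszX -dvd_pC rmorphXn unfold_in (negPf natr_prime_neq0) Cint_rat_Aint //.
by rewrite rpred_div ?rpredX ?rpred_int ?rpred_nat.
Qed.

Lemma Aint_frobenius_div (x y : algC) : x \in Aint -> y \in Aint ->
  ((x + y) ^+ p - x ^+ p - y ^+ p) / p%:R \in Aint.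
Proof.
move=> Ax Ay; have p_gt0 := prime_gt0 p_pr.
rewrite exprDn big_ord_recl /= subn0 expr0 mulr1 bin0 mulr1n.
rewrite -(prednK p_gt0) big_ord_recr /= /bump /= add1n prednK // subnn expr0 mul1r binn mulr1n.
have -> (u v w : algC) : u + (v + w) - u - w = v by ring.
rewrite mulr_suml rpred_sum // => i _.
have /dvdnP[m ->] : (p %| 'C(p, 1 + i))%N by apply: prime_dvd_bin; have := ltn_ord i; lia.
by rewrite -mulr_natr natrM mulrA mulfK ?natr_prime_neq0 // rpredM ?rpred_nat ?rpredM ?rpredX.
Qed.

End PrimeDivisibility.

Section PrimRootSums.

Variables (n : nat) (w : algC).
Hypothesis prim_w : n.-primitive_root w.

Lemma sum_prim_rootX i : \sum_(j < n) (w ^+ i) ^+ j = if (n %| i)%N then n%:R else 0.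
Proof.
have := one_sub_prim_rootX_eq0 prim_w i; rewrite subr_eq0 eq_sym.
case: (n %| i)%N => [/eqP-> | ne_wi1].
  by rewrite (eq_bigr (fun=> 1)) ?sumr_const ?card_ord // => j _; rewrite expr1n.
have : (w ^+ i - 1) * \sum_(j < n) (w ^+ i) ^+ j = 0.
  by rewrite -subrX1 exprAC (prim_expr_order prim_w) expr1n subrr.
by move/eqP; rewrite mulf_eq0 subr_eq0 ne_wi1 => /eqP.
Qed.

Lemma prim_root_coef_inversion (q : {poly algC}) m : (size q <= n)%N -> (m < n)%N ->
  \sum_(j < n) w ^+ ((n - m) * j) * q.[w ^+ j] = n%:R * q`_m.
Proof.
move=> le_qn lt_mn.
under eq_bigr do rewrite (horner_coef_wide _ le_qn) mulr_sumr.
rewrite exchange_big /=.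
transitivity (\sum_(i < n) q`_i * \sum_(j < n) (w ^+ (n - m + i)) ^+ j).
  apply: eq_bigr => i _; rewrite mulr_sumr; apply: eq_bigr => j _.
  by rewrite mulrCA -!exprM -exprD mulnDl [(i * j)%N]mulnC.
rewrite (bigD1 (Ordinal lt_mn)) //= [X in _ + X]big1 => [|i ne_im].
  by rewrite sum_prim_rootX subnK ?dvdnn 1?ltnW // addr0 mulrC.
rewrite sum_prim_rootX ifF ?mulr0 //; apply/negP => /dvdnP[d].
have := ltn_ord i; have : i != m :> nat by exact: ne_im.
by case: d => [|[|d]]; rewrite ?mulSn; lia.
Qed.

End PrimRootSums.

Section PiAdicExpansion.

Variables (p : nat) (z : algC).
Hypotheses (p_pr : prime p) (prim_z : p.-primitive_root z).
Local Notation pi := (1 - z).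

Lemma pi_neq0 : pi != 0.
Proof.
by rewrite -[z]expr1 (one_sub_prim_rootX_eq0 prim_z) dvdn1; apply: contraL p_pr => /eqP->.
Qed.

Lemma Aint_pi : pi \in Aint.
Proof. by rewrite rpredB ?Aint1 ?(Aint_prim_root prim_z). Qed.

Lemma Cint_div_prime_of_div_pi (x : algC) :
  x \in Num.int -> x / pi \in Aint -> x / p%:R \in Num.int.
Proof.
move=> Zx Ax; apply: (Cint_div_prime_of_expr p_pr Zx (j := p.-1)).
  by have := prime_gt1 p_pr; lia.
have -> : x ^+ p.-1 / p%:R = (x / pi) ^+ p.-1 * (pi ^+ p.-1 / p%:R).
  by rewrite expr_div_n mulrA divfK ?expf_neq0 ?pi_neq0.
by rewrite rpredM ?rpredX ?(Aint_one_sub_prim_root_div_prime p_pr prim_z).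
Qed.

Lemma pi_adic_digits (h : {poly algC}) m : h \is a polyOver Num.int ->
  (m + size h <= p.-1)%N -> pi ^+ m * h.[pi] / p%:R \in Aint ->
  forall i, h`_i / p%:R \in Num.int.
Proof.
elim/poly_ind: h m => [|h c IHh] m Zhc le_size Ahc i; first by rewrite coef0 mul0r rpred0.
have Zc : c \in Num.int by have := polyOverP Zhc 0; rewrite coefD coefMX coefC add0r.
have Zh : h \is a polyOver Num.int.
  by apply/polyOverP => j; have := polyOverP Zhc j.+1; rewrite coefD coefMX coefC addr0.
have [/andP[/eqP-> /eqP->] | nz_hc] := boolP ((h == 0) && (c == 0)).
  by rewrite mul0r add0r coefC; case: (i == 0); rewrite mul0r rpred0.
rewrite size_MXaddC (negPf nz_hc) in le_size; rewrite hornerMXaddC in Ahc.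
have p_neq0 := natr_prime_neq0 p_pr.
have Zc_p : c / p%:R \in Num.int.
  apply: Cint_div_prime_of_div_pi => //.
  set k := (p.-2 - m)%N; have Dp1 : p.-1 = (k + m).+1 by have := prime_gt1 p_pr; lia.
  have -> : c / pi = (pi ^+ k * (pi ^+ m * (h.[pi] * pi + c) / p%:R)
      - h.[pi] * (pi ^+ p.-1 / p%:R)) * (p%:R / pi ^+ p.-1).
    by rewrite Dp1 exprS exprD; field; rewrite p_neq0 pi_neq0 !expf_neq0 ?pi_neq0.
  apply: rpredM; last exact: (Aint_natr_div_one_sub_prim_root prim_z).
  apply: rpredB; first by rewrite rpredM ?rpredX ?Aint_pi.
  apply: rpredM; last exact: (Aint_one_sub_prim_root_div_prime p_pr prim_z).
  by apply: rpred_horner Aint_pi; apply: polyOverS Zh => x; apply: Aint_Cint.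
have Ah : pi ^+ m.+1 * h.[pi] / p%:R \in Aint.
  have -> : pi ^+ m.+1 * h.[pi] / p%:R =
      pi ^+ m * (h.[pi] * pi + c) / p%:R - pi ^+ m * (c / p%:R).
    by rewrite exprS; field.
  by rewrite rpredB // rpredM ?rpredX ?Aint_pi ?Aint_Cint.
rewrite coefD coefMX coefC; case: i => [|i] /=; first by rewrite add0r.
by rewrite addr0; apply: IHh Zh _ Ah i; rewrite addSn -addnS.
Qed.

Lemma Aint_horner_prim_rootX (q : {poly algC}) j : q \is a polyOver Crat ->
  q.[z] \in Aint -> coprime j p -> q.[z ^+ j] \in Aint.
Proof.
move=> Qq Aqz co_jp; have [u Du] := Qn_aut_exists co_jp.
have uq : map_poly u q = q.
  by apply/polyP => i; rewrite coef_map /= aut_Crat // (polyOverP Qq).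
by rewrite -Du ?(prim_expr_order prim_z) // -[q in q.[_]]uq horner_map Aint_aut.
Qed.

Lemma Cint_natr_mul_coef (q : {poly algC}) : q \is a polyOver Crat ->
  (size q <= p.-1)%N -> q.[z] \in Aint -> forall m, p%:R * q`_m \in Num.int.
Proof.
move=> Qq le_size Aqz; have p_gt0 := prime_gt0 p_pr.
have le_size' : (size q <= p)%N by apply: leq_trans le_size (leq_pred p).
have Zdiff m : (m < p.-1)%N -> p%:R * q`_m - q.[1] \in Num.int.
  move=> lt_m; apply: Cint_rat_Aint.
    by rewrite rpredB ?rpredM ?rpred_nat ?(polyOverP Qq) ?rpred_horner ?rpred1.
  rewrite -(prim_root_coef_inversion prim_z le_size'); last by have := ltn_ord (Ordinal lt_m); lia.
  rewrite (bigD1 (Ordinal p_gt0)) //= muln0 !expr0 mul1r addrAC subrr add0r.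
  rewrite rpred_sum // => j nz_j; rewrite rpredM ?rpredX ?(Aint_prim_root prim_z) //.
  by rewrite Aint_horner_prim_rootX // coprime_sym prime_coprime // gtnNdvd ?lt0n.
have Zq1 : q.[1] \in Num.int.
  have -> : q.[1] = \sum_(m < p.-1) (p%:R * q`_m - q.[1]).
    have <- : \sum_(m < p.-1) q`_m = q.[1].
      by rewrite (horner_coef_wide _ le_size); apply: eq_bigr => m _; rewrite expr1n mulr1.
    rewrite sumrB -mulr_sumr sumr_const card_ord -mulr_natr.
    by rewrite -[in p%:R](prednK p_gt0) -natr1; ring.
  by rewrite rpred_sum // => m _; apply: Zdiff.
move=> m; have [lt_m | le_m] := ltnP m p.-1.
  by rewrite -(subrK q.[1] (p%:R * q`_m)) rpredD ?Zdiff.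
by rewrite nth_default ?mulr0 ?rpred0 // (leq_trans le_size).
Qed.

Lemma Aint_cyclotomic_congr_Cint (q : {poly algC}) : q \is a polyOver Crat ->
  (size q <= p.-1)%N -> q.[z] \in Aint ->
  exists2 e, e \in Num.int & exists2 r, r \in Aint & q.[z] = e + pi * r.
Proof.
move=> Qq le_size Aqz; have p_neq0 := natr_prime_neq0 p_pr.
have size_1subX : size (1 - 'X : {poly algC}) = 2.
  by rewrite -opprB size_polyN -polyC1 size_XsubC.
pose g := (p%:R *: q) \Po (1 - 'X).
have Zg : g \is a polyOver Num.int.
  rewrite polyOver_comp ?rpredB ?rpred1 ?polyOverX //.
  by apply/polyOverP => i; rewrite coefZ Cint_natr_mul_coef.
have size_g : (size g <= p.-1)%N.
  by rewrite size_comp_poly2 // (leq_trans (size_scale_leq _ _)).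
have g_pi : g.[pi] = p%:R * q.[z] by rewrite horner_comp !hornerE opprB addrC subrK.
have Zg_p : forall i, g`_i / p%:R \in Num.int.
  by apply: (pi_adic_digits (m := 0)) => //; rewrite expr0 mul1r g_pi mulrC mulKf.
have Af : p%:R^-1 *: g \is a polyOver Aint.
  by apply/polyOverP => i; rewrite coefZ mulrC Aint_Cint.
have [s As] := horner_Aint_coef0 Af Aint_pi; rewrite hornerZ g_pi mulKf // => ->.
by exists (p%:R^-1 *: g)`_0; [rewrite coefZ mulrC | exists s].
Qed.

Lemma Aint_expr_prime_congr (e r : algC) : e \in Aint -> r \in Aint ->
  ((e + pi * r) ^+ p - e ^+ p) / p%:R \in Aint.
Proof.
move=> Ae Ar; have p_neq0 := natr_prime_neq0 p_pr.
have -> : ((e + pi * r) ^+ p - e ^+ p) / p%:R =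
    ((e + pi * r) ^+ p - e ^+ p - (pi * r) ^+ p) / p%:R + pi ^+ p.-1 / p%:R * pi * r ^+ p.
  by rewrite exprMn -[in pi ^+ p](prednK (prime_gt0 p_pr)) exprSr; field.
apply: rpredD; first by rewrite Aint_frobenius_div // rpredM ?Aint_pi.
rewrite rpredM ?rpredX // rpredM ?Aint_pi //.
exact: (Aint_one_sub_prim_root_div_prime p_pr prim_z).
Qed.

Lemma inv_pi_notin_Aint : pi^-1 \notin Aint.
Proof.
apply/negP => Aipi.
have Zip : (p%:R : algC)^-1 \in Num.int.
  apply: Cint_rat_Aint; first by rewrite rpredV rpred_nat.
  have -> : (p%:R : algC)^-1 = pi^-1 ^+ p.-1 * (pi ^+ p.-1 / p%:R).
    by rewrite exprVn mulrA mulVf ?mul1r // expf_neq0 ?pi_neq0.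
  by rewrite rpredM ?rpredX ?(Aint_one_sub_prim_root_div_prime p_pr prim_z).
have [n Dn] : exists n, (p%:R : algC)^-1 = n%:R.
  by apply/natrP; rewrite natrEint Zip invr_ge0 ler0n.
have : (n * p)%:R == 1 :> algC by rewrite natrM -Dn mulVf ?natr_prime_neq0.
by rewrite pnatr_eq1 muln_eq1 => /andP[_ /eqP p1]; move: p_pr; rewrite p1.
Qed.

Lemma prim_rootX_addV_not_congr_Cint k e : (3 < p)%N -> ~~ (p %| k)%N ->
  e \in Num.int -> (z ^+ k + (z ^+ k)^-1 - e) / p%:R \notin Aint.
Proof.
move=> p_gt3 ndvd_pk Ze; apply/negP => Au.
have Dp1 : p.-1 = (p - 4 + 2).+1 by clear -p_gt3; lia.
have p_neq0 := natr_prime_neq0 p_pr; have pi_neq0 := pi_neq0.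
set K := z ^+ k in Au *; set u := _ / p%:R in Au.
have K_neq0 : K != 0 by rewrite expf_neq0 // (prim_root_eq0 prim_z) -lt0n prime_gt0.
have AK : K \in Aint by rewrite rpredX ?(Aint_prim_root prim_z).
have K1_neq0 : 1 - K != 0 by rewrite (one_sub_prim_rootX_eq0 prim_z).
have AKV : K^-1 \in Aint := Aint_prim_rootXV prim_z k.
have A1K_pi : (1 - K) / pi \in Aint := Aint_one_sub_prim_rootX_div prim_z k.
have Api_1K : pi / (1 - K) \in Aint.
  by rewrite (Aint_one_sub_prim_root_divX prim_z) // coprime_sym prime_coprime.
have Ap_pi : p%:R / pi ^+ p.-1 \in Aint := Aint_natr_div_one_sub_prim_root prim_z.
pose N := 2 - e; have ZN : N \in Num.int by rewrite rpredB ?rpred_nat.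
have DN : N = p%:R * u - K^-1 * (1 - K) ^+ 2 by rewrite /u /N; field; rewrite K_neq0 p_neq0.
clearbody K u N.
have Zp_N : N / p%:R \in Num.int.
  apply: Cint_div_prime_of_div_pi => //.
  have -> : N / pi = p%:R / pi ^+ p.-1 * pi ^+ (p - 4 + 2) * u - K^-1 * ((1 - K) / pi) * (1 - K).
    by rewrite DN Dp1 (exprS _ (p - 4 + 2)); field; rewrite pi_neq0 K_neq0 expf_neq0.
  apply: rpredB; first by rewrite rpredM // rpredM ?rpredX ?Aint_pi.
  by rewrite rpredM ?rpredB ?Aint1 // rpredM.
have : pi^-1 \in Aint.
  have -> : pi^-1 = K * (pi / (1 - K)) ^+ 2 * (p%:R / pi ^+ p.-1) * pi ^+ (p - 4) * (u - N / p%:R).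
    rewrite DN Dp1 (exprS _ (p - 4 + 2)) exprD; field.
    by rewrite p_neq0 pi_neq0 K_neq0 K1_neq0 expf_neq0.
  apply: rpredM; last exact: rpredB Au (Aint_Cint Zp_N).
  by rewrite rpredM ?rpredX ?Aint_pi // rpredM // rpredM ?rpredX.
by rewrite (negPf inv_pi_notin_Aint).
Qed.

Lemma prim_rootX_addV_neq_horner_exprp (q : {poly algC}) k : (3 < p)%N ->
  ~~ (p %| k)%N -> q \is a polyOver Crat -> (size q <= p.-1)%N ->
  q.[z] ^+ p != z ^+ k + (z ^+ k)^-1.
Proof.
move=> p_gt3 ndvd_pk Qq le_size; apply/eqP => Dqp.
have Aqz : q.[z] \in Aint.
  apply: (Aint_of_expr (prime_gt0 p_pr)).
  by rewrite Dqp rpredD ?rpredX ?(Aint_prim_root prim_z) ?(Aint_prim_rootXV prim_z).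
have [e Ze [r Ar Dq]] := Aint_cyclotomic_congr_Cint Qq le_size Aqz.
have := prim_rootX_addV_not_congr_Cint p_gt3 ndvd_pk (rpredX p Ze).
by rewrite -Dqp Dq (Aint_expr_prime_congr (Aint_Cint Ze) Ar).
Qed.

End PiAdicExpansion.

Lemma expr_gcdn_mem (F0 : fieldType) (L : fieldExtType F0) (K : {subfield L}) (x : L) m k :
  x != 0 -> x ^+ m \in K -> x ^+ k \in K -> x ^+ gcdn m k \in K.
Proof.
move=> x_neq0 Kxm Kxk; case: (posnP m) => [-> | m_gt0]; first by rewrite gcd0n.
have [u v Duv _] := egcdnP k m_gt0.
have -> : x ^+ gcdn m k = x ^+ (u * m) / x ^+ (v * k).
  by rewrite Duv exprD mulrAC divff ?mul1r // expf_neq0.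
by rewrite rpred_div // mulnC exprM rpredX.
Qed.

Section Kummer.

Variables (F0 : fieldType) (L : splittingFieldType F0).
Variables (E : {subfield L}) (n : nat) (z a : L).
Hypotheses (prim_z : n.-primitive_root z) (zE : z \in E) (Ean : a ^+ n \in E).

Let n_gt0 : (0 < n)%N := prim_order_gt0 prim_z.

Lemma galois_adjoin_radical : a != 0 -> galois E <<E; a>>.
Proof.
move=> a_neq0; pose rs := [seq a * z ^+ i | i <- iota 0 n].
have uniq_rs : uniq rs.
  rewrite map_inj_in_uniq ?iota_uniq // => i j; rewrite !mem_iota !add0n => lt_in lt_jn.
  by move/(mulfI a_neq0)/eqP; rewrite (eq_prim_root_expr prim_z) !modn_small // => /eqP.
have Dpoly : 'X^n - (a ^+ n)%:P = \prod_(x <- rs) ('X - x%:P).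
  rewrite [LHS](all_roots_prod_XsubC (rs := rs)) ?(monicP (monicXnsubC _ n_gt0)) ?scale1r //.
  - by rewrite size_XnsubC // size_map size_iota.
  - apply/allP => _ /mapP[i _ ->]; rewrite /root !hornerE exprMn exprAC.
    by rewrite (prim_expr_order prim_z) expr1n mulr1 subrr.
  - by rewrite uniq_rootsE.
have Ers : <<E & rs>>%VS = <<E; a>>%VS.
  apply/eqP; rewrite eqEsubv; apply/andP; split.
    apply/Fadjoin_seqP; split; first exact: subv_adjoin.
    move=> _ /mapP[i _ ->]; rewrite rpredM ?memv_adjoin // rpredX //.
    exact: subvP (subv_adjoin E a) _ zE.
  apply/FadjoinP; split; first exact: subv_adjoin_seq.
  by apply: seqv_sub_adjoin; apply/mapP; exists 0%N; rewrite ?mem_iota ?mulr1.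
apply/splitting_galoisField; exists ('X^n - (a ^+ n)%:P); split.
- by rewrite rpredB ?rpredX ?polyOverX ?polyOverC.
- by rewrite Dpoly separable_prod_XsubC.
- by exists rs; rewrite ?Dpoly ?eqpxx.
Qed.

Lemma expr_dim_adjoin_radical : a ^+ \dim_E <<E; a>> \in E.
Proof.
have [-> | a_neq0] := eqVneq a 0; first by rewrite expr0n; case: eqP; rewrite ?mem0v ?mem1v.
have galEa := galois_adjoin_radical a_neq0.
have E_gal_ratio x : x \in 'Gal(<<E; a>> / E)%g -> x a / a \in E.
  move=> galx; have : x (a ^+ n) = a ^+ n := fixed_gal (subv_adjoin E a) galx Ean.
  rewrite rmorphXn => xan; have : (x a / a) ^+ n = 1.
    by rewrite expr_div_n xan divff ?expf_neq0.
  by case/(prim_rootP prim_z) => i ->; rewrite rpredX.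
have -> : a ^+ \dim_E <<E; a>> =
    galNorm E <<E; a>> a / \prod_(x in 'Gal(<<E; a>> / E)%g) (x a / a).
  rewrite /galNorm (galois_dim galEa) -prodr_const -prodf_div.
  by apply: eq_bigr => x _; rewrite invf_div mulrC divfK ?fmorph_eq0.
by rewrite rpred_div ?mem_galNorm ?memv_adjoin // rpred_prod.
Qed.

Lemma dim_adjoin_prime_radical : prime n -> a \notin E -> \dim_E <<E; a>> = n.
Proof.
move=> n_pr aNE; have a_neq0 : a != 0 by apply: contraNneq aNE => ->; rewrite mem0v.
rewrite -adjoin_degreeE.
have le_dn : (adjoin_degree E a <= n)%N.
  rewrite -ltnS -size_minPoly -(size_XnsubC (a ^+ n) n_gt0).
  apply: dvdp_leq; first by rewrite -size_poly_eq0 size_XnsubC.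
  by rewrite minPoly_dvdp ?rpredB ?rpredX ?polyOverX ?polyOverC // /root !hornerE subrr.
apply/eqP; rewrite eqn_leq le_dn leqNgt; apply: contra aNE => lt_dn.
have co_dn : coprime (adjoin_degree E a) n.
  by rewrite coprime_sym prime_coprime // gtnNdvd ?adjoin_deg_gt0.
have := expr_gcdn_mem a_neq0 expr_dim_adjoin_radical Ean.
by rewrite -adjoin_degreeE (eqnP co_dn) expr1.
Qed.

Lemma kummer_prime_radical : prime n -> a \notin E ->
  [/\ galois E <<E; a>>, cyclic 'Gal(<<E; a>> / E) & \dim_E <<E; a>> = n].
Proof.
move=> n_pr aNE; have a_neq0 : a != 0 by apply: contraNneq aNE => ->; rewrite mem0v.
have galEa := galois_adjoin_radical a_neq0; have dimEa := dim_adjoin_prime_radical n_pr aNE.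
by split=> //; apply: prime_cyclic; rewrite -(galois_dim galEa) dimEa.
Qed.

End Kummer.

Lemma zetaC_prim_root p : prime p -> p.-primitive_root (zetaC p).
Proof.
move=> p_pr; have p_gt1 := prime_gt1 p_pr.
rewrite /zetaC; set y := p.-root (-1).
have yp : y ^+ p = -1 by rewrite rootCK // ltnW.
have zp : (y ^+ 2) ^+ p = 1 by rewrite exprAC yp sqrrN expr1n.
have [m prim_m dvd_mp] := prim_order_exists (ltnW p_gt1) zp.
have [/eqP m1 | /eqP <- //] := orP ((primeP p_pr).2 m dvd_mp).
have := prim_expr_order prim_m; rewrite m1 expr1 => /eqP.
rewrite sqrf_eq1 => /orP[/eqP y1 | /eqP y1].
  by move/eqP: yp; rewrite y1 expr1n -addr_eq0 -[1 + 1]/(2%:R : algC) pnatr_eq0.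
by have := @rootC_lt0 algC p (-1) p_gt1; rewrite -/y y1 oppr_lt0 ltr01.
Qed.

Lemma adjoin_degree_prim_root (F0 : fieldType) (L : fieldExtType F0) (K : {subfield L})
    n (z : L) : (1 < n)%N -> n.-primitive_root z -> (adjoin_degree K z <= n.-1)%N.
Proof.
move=> n_gt1 prim_z; pose Phi : {poly L} := \poly_(i < n) 1.
have size_Phi : size Phi = n by rewrite size_poly_eq ?oner_eq0.
rewrite -ltnS -size_minPoly (prednK (ltnW n_gt1)) -[X in (_ <= X)%N]size_Phi.
apply: dvdp_leq; first by rewrite -size_poly_eq0 size_Phi -lt0n ltnW.
apply: minPoly_dvdp; first by apply/polyOver_poly => i _; rewrite mem1v.
have : (z - 1) * Phi.[z] = 0.
  rewrite horner_poly; under eq_bigr do rewrite mul1r.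
  by rewrite -subrX1 (prim_expr_order prim_z) subrr.
rewrite /root; move/eqP; rewrite mulf_eq0 subr_eq0 => /orP[/eqP z1 | //].
have := prim_order_dvd prim_z 1; rewrite expr1 z1 eqxx dvdn1 => /eqP n1.
by rewrite n1 in n_gt1.
Qed.

Lemma ratr_horner_adjoin1 (L : fieldExtType rat) (iota : {rmorphism L -> algC})
    (z x : L) : x \in <<1; z>>%VS -> exists q : {poly algC},
    [/\ q \is a polyOver Crat, (size q <= adjoin_degree 1%VS z)%N & iota x = q.[iota z]].
Proof.
move=> xQz; have /polyOver1P[q0 Dq] := Fadjoin_polyOver 1 z x.
exists (map_poly ratr q0); split.
- by apply/polyOverP => i; rewrite coef_map Crat_rat.
- by rewrite size_map_poly -(size_map_poly (in_alg L)) -Dq size_Fadjoin_poly.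
rewrite -(Fadjoin_poly_eq xQz) Dq -horner_map; congr (_.[_]).
by apply/polyP => i; rewrite !coef_map /= alg_num_field fmorph_rat.
Qed.

Theorem mainTheorem11
  (p k : nat) (hp : prime p) (hp3 : (3 < p)%N)
  (hk1 : (1 <= k)%N) (hk2 : (k <= p.-1./2)%N)
  (L : splittingFieldType rat) (iota : {rmorphism L -> algC})
  (z a : L)
  (hz : iota z = zetaC p)
  (ha : a ^+ p = z ^+ k + z ^- k) :
  let E : {subfield L} := <<1; z>>%VS in
  let F : {subfield L} := <<E; a>>%VS in
  [/\ galois E F, cyclic 'Gal(F / E) & \dim_E F = p].
Proof.
move=> E F; have prim_zetaC := zetaC_prim_root hp.
have prim_z : p.-primitive_root z by rewrite -(fmorph_primitive_root iota) hz.
have ndvd_pk : ~~ (p %| k)%N.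
  by rewrite gtnNdvd // (leq_ltn_trans hk2) // -divn2 ltn_divLR //; lia.
have aNE : a \notin E.
  apply/negP => /(ratr_horner_adjoin1 iota)[q [Qq le_q Dq]].
  have le_q' := leq_trans le_q (adjoin_degree_prim_root 1%VS (prime_gt1 hp) prim_z).
  have := prim_rootX_addV_neq_horner_exprp hp prim_zetaC hp3 ndvd_pk Qq le_q'.
  by rewrite -hz -Dq -rmorphXn ha rmorphD fmorphV rmorphXn eqxx.
have Eap : a ^+ p \in E by rewrite ha rpredD ?rpredV ?rpredX ?memv_adjoin.
exact: kummer_prime_radical prim_z (memv_adjoin 1 z) Eap hp aNE.
Qed.
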